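(* For every composition $\alpha$ there exists $K$ such that for all integers $k\ge K$ one has $\mathbf{S}^{(k)}_\alpha=\mathbf{S}_\alpha$ in $\mathsf{NSym}$; that is, $\mathbf{S}^{(k)}_\alpha\to\mathbf{S}_\alpha$ as $k\to\infty$.
   Context: Compositions are finite sequences of positive integers (possibly empty $\emptyset$); $k$-bounded means all parts $\le k$; $\lambda(\alpha)$ is the sorted partition. $\mathsf{NSym}=\mathbb{Q}\langle H_1,H_2,\dots\rangle$ (noncommuting generators), $\mathsf{NSym}_{(k)}$ its subalgebra generated by $H_1,\dots,H_k$. Box-adding operators: $t_1(\alpha)=[1,\alpha_1,\dots,\alpha_m]$; for $i\ge2$, $t_i(\alpha)$ replaces the leftmost part equal to $i-1$ by $i$ (undefined if none). $\beta//\alpha$ is a horizontal composition strip of size $n$ if $\beta=t_{i_n}\cdots t_{i_1}(\alpha)$ with $1\le i_1<\cdots<i_n$. The non-commutative Schur functions $\{\mathbf{S}_\alpha\}$ form the unique basis of $\mathsf{NSym}$ with $\mathbf{S}_\emptyset=1$ and $H_i\mathbf{S}_\alpha=\sum_\beta\mathbf{S}_\beta$ for all $i\ge1$, summed over $\beta$ with $\beta//\alpha$ a horizontal composition strip of size $i$. $k$-conjugation: hook length of cell $(i,j)$ of $\kappa$ is $\kappa_i-j+\kappa'_j-i+1$; a $(k+1)$-core has no cell of hook length $k+1$; $p(\kappa)$ has $i$-th part the number of cells in row $i$ with hook length $\le k$; $p$ is a bijection from $(k+1)$-cores to $k$-bounded partitions with inverse $c$; $\lambda^{\omega_k}=p(c(\lambda)')$.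 For $k$-bounded partitions $\mu\subseteq\lambda$, $\lambda/\mu$ is a horizontal $k$-strip if no two of its cells share a column, and $\mu^{\omega_k}\subseteq\lambda^{\omega_k}$ with no two cells of $\lambda^{\omega_k}/\mu^{\omega_k}$ in the same row. For $k$-bounded $\alpha,\beta$, $\beta//\alpha$ is a horizontal $k$-composition strip of size $n$ if it is a horizontal composition strip of size $n$ and $\lambda(\beta)/\lambda(\alpha)$ is a horizontal $k$-strip. The non-commutative affine Schur functions $\{\mathbf{S}^{(k)}_\alpha\}_{\alpha\ k\text{-bounded}}$ form the unique basis of $\mathsf{NSym}_{(k)}$ with $\mathbf{S}^{(k)}_\emptyset=1$ and $H_i\mathbf{S}^{(k)}_\alpha=\sum_\beta\mathbf{S}^{(k)}_\beta$ for $1\le i\le k$, summed over $\beta$ with $\beta//\alpha$ a horizontal $k$-composition strip of size $i$. ($\mathbf{S}^{(k)}_\alpha$ is defined once $k$ is at least the largest part of $\alpha$.) *)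

(* NSym is modelled as the free associative Q-algebra on
   H_1, H_2, ...: an element is a finitely supported function from words
   (compositions) to rat, the word gamma standing for H_gamma_1 ... H_gamma_m. *)
From mathcomp Require Import all_boot all_order all_algebra.
From mathcomp Require Import boolp.
Set Implicit Arguments.
Unset Strict Implicit.
Unset Printing Implicit Defensive.
Import Order.TTheory GRing.Theory Num.Theory.
Local Open Scope ring_scope.

Definition composition (a : seq nat) : bool := all (fun x => (0 < x)%N) a.
Definition kbounded (k : nat) (a : seq nat) : bool := all (fun x => (x <= k)%N) a.

Fixpoint comps_aux (fuel m : nat) : seq (seq nat) :=
  match fuel with
  | 0 => if m == 0%N then [:: [::]] else [::]
  | fuel'.+1 =>
      if m == 0%N then [:: [::]]
      else flatten [seq [seq j :: c | c <- comps_aux fuel' (m - j)] | j <- iota 1 m]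
  end.
Definition comps (m : nat) : seq (seq nat) := comps_aux m m.

Definition lam (a : seq nat) : seq nat := sort geq a.

Definition nsym := seq nat -> rat.

Definition supported_on (Q : pred (seq nat)) (f : nsym) : Prop :=
  exists L : seq (seq nat), all Q L /\ forall w, f w != 0 -> w \in L.

Definition nsym_one : nsym := fun w => if w == [::] then 1 else 0.
Definition H (i : nat) : nsym := fun w => if w == [:: i] then 1 else 0.
Definition nsym_mul (f g : nsym) : nsym :=
  fun w => \sum_(j < (size w).+1) f (take j w) * g (drop j w).

Definition is_basis (P Q : pred (seq nat)) (B : seq nat -> nsym) : Prop :=
  [/\ (forall a, P a -> supported_on Q (B a)),
      (forall (L : seq (seq nat)) (c : seq nat -> rat),
          uniq L -> all P L ->
          (forall w, \sum_(a <- L) c a * B a w = 0) ->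
          forall a, a \in L -> c a = 0)
    & (forall f, supported_on Q f ->
          exists (L : seq (seq nat)) (c : seq nat -> rat),
            all P L /\ forall w, f w = \sum_(a <- L) c a * B a w)].

Definition t_op (i : nat) (a : seq nat) : option (seq nat) :=
  if i == 0%N then None
  else if i == 1%N then Some (1%N :: a)
  else if (i.-1 \in a) then Some (set_nth 0%N a (index i.-1 a) i) else None.

Definition apply_t (s : seq nat) (a : seq nat) : option (seq nat) :=
  foldl (fun o i => obind (t_op i) o) (Some a) s.

Definition hcstrip (n : nat) (b a : seq nat) : Prop :=
  exists s : seq nat,
    [/\ size s = n, all (fun i => (0 < i)%N) s, sorted ltn s & apply_t s a = Some b].

Definition partition (l : seq nat) : bool := sorted geq l && all (fun x => (0 < x)%N) l.
Definition is_cell (l : seq nat) (i j : nat) : bool := (i < size l)%N && (j < nth 0%N l i)%N.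
Definition conj_part (l : seq nat) : seq nat :=
  [seq count (fun r => (j < r)%N) l | j <- iota 0 (nth 0%N l 0)].
(* hook length of cell (i,j): arm + leg + 1 *)
Definition hook (l : seq nat) (i j : nat) : nat :=
  (nth 0%N l i - j.+1 + (nth 0%N (conj_part l) j - i.+1)).+1.
Definition is_core (m : nat) (l : seq nat) : Prop :=
  partition l /\ forall i j, is_cell l i j -> hook l i j != m.
(* p(kappa): row i counts cells of row i with hook length <= k
   (zero entries dropped, so the result is a partition) *)
Definition p_k (k : nat) (l : seq nat) : seq nat :=
  filter (fun x => (0 < x)%N)
    [seq count (fun j => (hook l i j <= k)%N) (iota 0 (nth 0%N l i)) | i <- iota 0 (size l)].
(* nu = lambda^{omega_k} = p(c(lambda)'), where c(lambda) is the (k+1)-core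
   kappa with p(kappa) = lambda *)
Definition kconj (k : nat) (lambda nu : seq nat) : Prop :=
  exists kappa, [/\ is_core k.+1 kappa, p_k k kappa = lambda & p_k k (conj_part kappa) = nu].

Definition part_le (m l : seq nat) : Prop := forall i, (nth 0%N m i <= nth 0%N l i)%N.
Definition skew_cell (l m : seq nat) (i j : nat) : bool := is_cell l i j && ~~ is_cell m i j.

Definition hkstrip (k : nat) (l m : seq nat) : Prop :=
  [/\ part_le m l,
      (forall i1 i2 j, skew_cell l m i1 j -> skew_cell l m i2 j -> i1 = i2)
    & exists mw lw, [/\ kconj k m mw, kconj k l lw, part_le mw lw &
        forall i j1 j2, skew_cell lw mw i j1 -> skew_cell lw mw i j2 -> j1 = j2]].

Definition hkcstrip (k n : nat) (b a : seq nat) : Prop :=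
  hcstrip n b a /\ hkstrip k (lam b) (lam a).

Definition is_ncSchur (S : seq nat -> nsym) : Prop :=
  [/\ S [::] = nsym_one,
      is_basis composition composition S
    & forall i a, (0 < i)%N -> composition a ->
        nsym_mul (H i) (S a) =
        (fun w => \sum_(b <- comps (sumn a + i) | `[< hcstrip i b a >]) S b w)].

Definition is_ncAffSchur (k : nat) (Sk : seq nat -> nsym) : Prop :=
  let P := fun a => composition a && kbounded k a in
  [/\ Sk [::] = nsym_one,
      is_basis P P Sk
    & forall i a, (0 < i <= k)%N -> P a ->
        nsym_mul (H i) (Sk a) =
        (fun w => \sum_(b <- comps (sumn a + i) | P b && `[< hkcstrip k i b a >]) Sk b w)].

From Pilot Require Import Defs.
From mathcomp Require Import all_boot all_order all_algebra.
From mathcomp Require Import boolp zify.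
Set Implicit Arguments.
Unset Strict Implicit.
Unset Printing Implicit Defensive.
Import GRing.Theory Num.Theory.

(* If [2|b| <= k], every partition of size at most [|b|] fits inside a hook of
   size at most [k], hence is its own [(k+1)]-core and is fixed by [p]; so [k]-conjugation
   is ordinary conjugation.  A horizontal composition strip lengthens each column
   of the underlying diagram by at most one box, so it is then automatically a
   horizontal [k]-composition strip: in degrees at most [k/2] the functions
   [S^(k)] satisfy the same Pieri rules as [S].  These rules determine the
   family, because in [H_x S_c] the term [S_(x::c)] appears, while every other
   [S_b] has fewer parts than [x :: c], or as many parts and first part [< x];
   induction on [(|b|, length b, first part of b)] concludes. *)

Lemma leq_sumn_mem (s : seq nat) x : x \in s -> (x <= sumn s)%N.
Proof.
elim: s => //= y s IH; rewrite inE => /orP [/eqP -> | /IH]; first exact: leq_addr.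
by move/leq_trans; apply; apply: leq_addl.
Qed.

Lemma leq_nth_sumn (s : seq nat) i : (nth 0%N s i <= sumn s)%N.
Proof.
by case: (ltnP i (size s)) => h; [apply/leq_sumn_mem/mem_nth | rewrite nth_default].
Qed.

Lemma size_composition_le (s : seq nat) : composition s -> (size s <= sumn s)%N.
Proof. by elim: s => //= y s IH /andP [y0 /IH h]; rewrite -add1n leq_add. Qed.

Lemma kbounded_sumn k (s : seq nat) : (sumn s <= k)%N -> kbounded k s.
Proof. by move=> sk; apply/allP => y /leq_sumn_mem /leq_trans; apply. Qed.

Lemma comps_aux_sound fuel m b :
  b \in comps_aux fuel m -> composition b /\ sumn b = m.
Proof.
elim: fuel m b => [|f IH] m b /=.
  by case: eqP => // ->; rewrite inE => /eqP ->.
case: eqP => [-> | _]; first by rewrite inE => /eqP ->.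
case/flattenP => l /mapP [j]; rewrite mem_iota => /andP [j1 jm] ->.
case/mapP => c /IH [cc sc] ->; rewrite /composition /= j1 sc; split => //; lia.
Qed.

Lemma comps_aux_complete fuel b : composition b -> (sumn b <= fuel)%N ->
  b \in comps_aux fuel (sumn b).
Proof.
elim: fuel b => [|f IH] [|x c] //=; first by case/andP; lia.
move=> /andP [x0 cc] hle; rewrite (_ : (x + sumn c == 0) = false); last lia.
apply/flattenP; exists [seq x :: c' | c' <- comps_aux f (x + sumn c - x)].
  by apply/mapP; exists x => //; rewrite mem_iota; lia.
by apply/mapP; exists c => //; rewrite addKn; apply: IH => //; lia.
Qed.

Lemma comps_sound m b : b \in comps m -> composition b /\ sumn b = m.
Proof. exact: comps_aux_sound. Qed.

Lemma comps_complete b : composition b -> b \in comps (sumn b).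
Proof. by move=> cb; apply: comps_aux_complete. Qed.

Lemma apply_t_cons i s a :
  apply_t (i :: s) a = if t_op i a is Some a' then apply_t s a' else None.
Proof. by rewrite /apply_t /=; case: (t_op i a) => //=; elim: s. Qed.

Lemma apply_t_rcons s i a : apply_t (rcons s i) a = obind (t_op i) (apply_t s a).
Proof. by rewrite /apply_t foldl_rcons. Qed.

Lemma apply_t_iota x d : (0 < x)%N -> apply_t (iota 1 x) d = Some (x :: d).
Proof.
case: x => // x _; elim: x => // x IH.
by rewrite -[x.+2]addn1 iotaD cats1 apply_t_rcons IH /= /t_op /= inE eqxx addn1.
Qed.

Lemma hcstrip_cons x c : (0 < x)%N -> hcstrip x (x :: c) c.
Proof.
move=> x0; exists (iota 1 x); split.
- exact: size_iota.
- by apply/allP => y; rewrite mem_iota => /andP [].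
- exact: iota_ltn_sorted.
- exact: apply_t_iota.
Qed.

Lemma t_op_cons h i d : (h.+1 < i)%N -> t_op i (h :: d) = omap (cons h) (t_op i d).
Proof.
move=> hi; rewrite /t_op inE.
have [-> -> ->] : [/\ i == 0 = false, i == 1 = false & i.-1 == h = false].
  by split; apply/eqP; lia.
rewrite orFb; case: ifP => // _; rewrite /= (_ : h == i.-1 = false) //; apply/eqP; lia.
Qed.

Lemma apply_t_cons_tail h s d : all (fun i => h.+1 < i)%N s ->
  apply_t s (h :: d) = omap (cons h) (apply_t s d).
Proof.
elim: s d => [|i s IH] d //= /andP [hi hs].
by rewrite !apply_t_cons t_op_cons //; case: (t_op i d) => //= d'; apply: IH.
Qed.

Lemma size_apply_t s a b : all (fun i => 1 < i)%N s -> apply_t s a = Some b ->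
  size b = size a.
Proof.
elim: s a => [|i s IH] a /=; first by move=> _ [->].
case/andP=> hi /IH {}IH; rewrite apply_t_cons; case E: (t_op i a) => [a'|] // /IH ->.
move: E; rewrite /t_op; case: i hi => // [[|i]] // _ /=.
by case: ifP => // ha [<-]; rewrite size_set_nth; apply/maxn_idPr; rewrite index_mem.
Qed.

(* Only [t_{m+1}] can touch the head [m]; it then becomes [m+1]. *)
Lemma head_apply_t s m d b : sorted ltn s -> all (fun i => m < i)%N s -> (0 < m)%N ->
  apply_t s (m :: d) = Some b ->
  [/\ size b = (size d).+1, (head 0%N b <= m + size s)%N &
      head 0%N b = (m + size s)%N -> b = (m + size s)%N :: d].
Proof.
elim: s m d b => [|i s IH] m d b /=; first by move=> _ _ _ [<-]; rewrite addn0.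
move=> sorted_is /andP [mi ms] m0.
have ss : sorted ltn s := path_sorted sorted_is.
have als : all (fun j => i < j)%N s := order_path_min ltn_trans sorted_is.
have [hi | ei] : (m.+1 < i)%N \/ i = m.+1 by lia.
- have al : all (fun j => m.+1 < j)%N (i :: s).
    by rewrite /= hi; apply/allP => j /(allP als); lia.
  rewrite apply_t_cons_tail //; case E: (apply_t _ d) => [b'|] //= [<-] /=.
  rewrite (size_apply_t _ E); first by split => //; lia.
  by apply/allP => j /(allP al); lia.
- subst i; rewrite apply_t_cons (_ : t_op m.+1 (m :: d) = Some (m.+1 :: d)); last first.
    by rewrite /t_op /= inE eqxx; case: m m0 {IH ms als sorted_is mi}.
  by move=> /(IH _ _ _ ss als (ltn0Sn _)); rewrite addnS -addSn.
Qed.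

Lemma hcstrip_other x c b : (0 < x)%N -> hcstrip x b c -> b != x :: c ->
  (size b < size (x :: c))%N \/ size b = size (x :: c) /\ (head 0%N b < x)%N.
Proof.
move=> x0 [[|i s] [sz spos sorted_is ha] hne] /=; first by rewrite -sz in x0.
have als : all (fun j => i < j)%N s := order_path_min ltn_trans sorted_is.
have [i1 | ei] : (1 < i)%N \/ i = 1%N by move: spos => /andP []; lia.
  left; rewrite (size_apply_t _ ha) //=.
  by rewrite i1; apply/allP => j /(allP als); lia.
subst i; move: ha; rewrite apply_t_cons /= => ha.
have [-> hd eq_hd] := head_apply_t (path_sorted sorted_is) als (ltn0Sn 0) ha.
right; split => //; rewrite -sz /=.
suff: head 0%N b != (size s).+1 by move: hd; rewrite add1n; lia.
by apply: contra hne => /eqP e; rewrite eq_hd add1n ?e // -sz.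
Qed.

(* [col_len s j] is the length of column [j] (0-indexed) of the diagram of [lam s]. *)
Definition col_len (s : seq nat) j := count (fun r => j < r)%N s.

Lemma col_len_t_op i a a' j : t_op i a = Some a' ->
  col_len a' j = (col_len a j + (j.+1 == i))%N.
Proof.
rewrite /t_op /col_len; case: i => [|[|i]] //=; first by move=> [<-] /=; rewrite addnC; case: j.
case: ifP => // ha [<-]; rewrite count_set_nthF // nth_index //.
by case: (ltngtP j i.+1) => h; lia.
Qed.

Lemma col_len_apply_t s a b j : apply_t s a = Some b ->
  col_len b j = (col_len a j + count_mem j.+1 s)%N.
Proof.
elim: s a => [|i s IH] a; first by move=> [<-]; rewrite addn0.
rewrite apply_t_cons; case E: (t_op i a) => [a'|] // /IH ->.
by rewrite (col_len_t_op _ E) /= eq_sym addnA.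
Qed.

Lemma hcstrip_col_len n b a j : hcstrip n b a ->
  (col_len a j <= col_len b j <= (col_len a j).+1)%N.
Proof.
case=> s [_ _ sorted_s ha]; rewrite (col_len_apply_t _ ha) count_uniq_mem.
  by case: (_ \in _); rewrite ?addn0 ?addn1 leqnn ?leqnSn.
exact: (sorted_uniq (leT:=ltn) ltn_trans ltnn sorted_s).
Qed.

Lemma sorted_nth_col_len l i j : sorted geq l ->
  (j < nth 0%N l i)%N = (i < col_len l j)%N.
Proof.
elim: l i => [|x l IH] i /=; first by rewrite nth_nil.
move=> sorted_xl; have sorted_l := path_sorted sorted_xl.
have le_x : all (fun y => y <= x)%N l.
  by apply: order_path_min sorted_xl => y z t zy ty; apply: leq_trans ty zy.
have col0 : (x <= j)%N -> col_len l j = 0%N.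
  move=> xj; apply/eqP; rewrite -leqn0 leqNgt -has_count.
  by apply/hasPn => y /(allP le_x) yx; rewrite -leqNgt (leq_trans yx xj).
case: i => [|i] /=; case: (ltnP j x) => h /=.
- by [].
- by rewrite col0.
- by rewrite IH.
- by rewrite IH // col0.
Qed.

Lemma lam_perm s : perm_eq (lam s) s.
Proof. by rewrite /lam perm_sort. Qed.

Lemma lam_sorted s : sorted geq (lam s).
Proof. by apply: sort_sorted => x y; apply: leq_total. Qed.

Lemma col_len_lam s j : col_len (lam s) j = col_len s j.
Proof. exact/permP/lam_perm. Qed.

Lemma lam_nth s i j : (j < nth 0%N (lam s) i)%N = (i < col_len s j)%N.
Proof. by rewrite sorted_nth_col_len ?lam_sorted ?col_len_lam. Qed.

Lemma is_cellE l i j : is_cell l i j = (j < nth 0%N l i)%N.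
Proof. by rewrite /is_cell; case: ltnP => // h; rewrite nth_default. Qed.

Lemma nth_conj_part_lam s j : nth 0%N (conj_part (lam s)) j = col_len s j.
Proof.
rewrite /conj_part; case: (ltnP j (nth 0%N (lam s) 0)) => h.
  by rewrite (nth_map 0%N) ?size_iota // nth_iota // -col_len_lam.
rewrite nth_default ?size_map ?size_iota //.
by apply/esym/eqP; rewrite -leqn0 leqNgt -lam_nth -leqNgt.
Qed.

Lemma nth_conj_part_le l j : (nth 0%N (conj_part l) j <= size l)%N.
Proof.
rewrite /conj_part; case: (ltnP j (nth 0%N l 0)) => h.
  by rewrite (nth_map 0%N) ?size_iota // count_size.
by rewrite nth_default ?size_map ?size_iota.
Qed.

Lemma hook_le l i j : (j < nth 0%N l i)%N -> (hook l i j <= nth 0%N l i + size l)%N.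
Proof. by rewrite /hook; have := nth_conj_part_le l j; lia. Qed.

Lemma p_k_id k l : all (fun x => 0 < x)%N l ->
  (forall i j, (j < nth 0%N l i)%N -> (hook l i j <= k)%N) -> p_k k l = l.
Proof.
move=> l_pos hook_k; rewrite /p_k -[in RHS](all_filterP l_pos) -[in RHS](mkseq_nth 0%N l).
congr filter; apply: eq_map => i; rewrite -[RHS](size_iota 0).
by apply/eqP; rewrite -all_count; apply/allP => j; rewrite mem_iota => /andP [_ /hook_k].
Qed.

Lemma partition_nth_le_head l i : Defs.partition l -> (nth 0%N l i <= nth 0%N l 0)%N.
Proof.
case: l => [|x l] /andP [sorted_xl _]; first by rewrite nth_nil.
case: i => //= i; case: (ltnP i (size l)) => h; last by rewrite nth_default.
have le_x : all (fun y => y <= x)%N l.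
  by apply: order_path_min sorted_xl => y z t zy ty; apply: leq_trans ty zy.
exact: (allP le_x) (mem_nth 0%N h).
Qed.

Lemma conj_part_pos l : Defs.partition l -> all (fun x => 0 < x)%N (conj_part l).
Proof.
case: l => [|x l] // _; apply/allP => y /mapP [j]; rewrite mem_iota /= add0n => jx ->.
by rewrite jx.
Qed.

Lemma kconj_small k l : Defs.partition l -> (nth 0%N l 0 + size l <= k)%N ->
  kconj k l (conj_part l).
Proof.
move=> part_l small.
have hook_l i j : (j < nth 0%N l i)%N -> (hook l i j <= k)%N.
  by move/hook_le/leq_trans; apply; have := partition_nth_le_head i part_l; lia.
have hook_conj i j : (j < nth 0%N (conj_part l) i)%N -> (hook (conj_part l) i j <= k)%N.
  move/hook_le/leq_trans; apply; rewrite size_map size_iota.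
  by have := nth_conj_part_le l i; lia.
exists l; split.
- by split => // i j; rewrite is_cellE => /hook_l; lia.
- by apply: p_k_id => //; case/andP: part_l.
- by apply: p_k_id => //; apply: conj_part_pos.
Qed.

Lemma kconj_lam k s : composition s -> (2 * sumn s <= k)%N ->
  kconj k (lam s) (conj_part (lam s)).
Proof.
move=> comp_s sk; apply: kconj_small.
  by rewrite /Defs.partition lam_sorted (perm_all _ (lam_perm s)).
have := leq_nth_sumn (lam s) 0; have := size_composition_le comp_s.
rewrite (perm_sumn (lam_perm s)) (perm_size (lam_perm s)) => size_s head_s.
by apply: leq_trans (leq_add head_s size_s) _; rewrite addnn -mul2n.
Qed.

Lemma hkstrip_lam k b c : composition b -> composition c ->
  (2 * sumn b <= k)%N -> (2 * sumn c <= k)%N ->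
  (forall j, col_len c j <= col_len b j <= (col_len c j).+1)%N ->
  hkstrip k (lam b) (lam c).
Proof.
move=> comp_b comp_c bk ck col_cb; split.
- move=> i; rewrite leqNgt lam_nth; apply/negP => lt_i.
  have /andP [le_cb _] := col_cb (nth 0%N (lam b) i).
  by have := leq_trans lt_i le_cb; rewrite -lam_nth ltnn.
- move=> i1 i2 j; rewrite /skew_cell !is_cellE !lam_nth.
  by have := col_cb j; lia.
- exists (conj_part (lam c)), (conj_part (lam b)); split; try exact: kconj_lam.
  + by move=> j; rewrite !nth_conj_part_lam; case/andP: (col_cb j).
  + move=> i j1 j2; rewrite /skew_cell !is_cellE !nth_conj_part_lam.
    by have := col_cb i; lia.
Qed.

Lemma hkcstrip_hcstrip k n b c : composition b -> composition c ->
  (2 * sumn b <= k)%N -> (sumn c <= sumn b)%N -> hcstrip n b c -> hkcstrip k n b c.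
Proof.
move=> comp_b comp_c bk cb strip; split => //; apply: hkstrip_lam => //; first lia.
by move=> j; apply: hcstrip_col_len strip.
Qed.

Local Open Scope ring_scope.

Definition comp_lt (b a : seq nat) : bool :=
  (sumn b < sumn a)%N || (sumn b == sumn a) &&
    ((size b < size a)%N || (size b == size a) && (head 0%N b < head 0%N a)%N).

Lemma comp_lt_ind (P : seq nat -> Prop) :
  (forall a, (forall b, comp_lt b a -> P b) -> P a) -> forall a, P a.
Proof.
move=> IH a.
suff: forall n m h a, sumn a = n -> size a = m -> head 0%N a = h -> P a by apply.
elim/ltn_ind=> n IHn; elim/ltn_ind=> m IHm; elim/ltn_ind=> h IHh.
move=> {}a sum_a size_a head_a; subst n m h.
apply: IH => b /orP [lt_n | /andP [/eqP eq_n /orP [lt_m | /andP [/eqP eq_m lt_h]]]].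
- exact: IHn lt_n _ _ _ erefl erefl erefl.
- exact: IHm lt_m _ _ eq_n erefl erefl.
- exact: IHh lt_h _ eq_n eq_m erefl.
Qed.

Lemma sum_eq0_isolate (R : numDomainType) (L : seq (seq nat)) (Q : pred (seq nat))
    (F : seq nat -> R) b :
  b \in L -> Q b -> \sum_(b' <- L | Q b') F b' = 0 ->
  (forall b', b' \in L -> Q b' -> b' != b -> F b' = 0) -> F b = 0.
Proof.
move=> bL Qb sum0 others0.
have rest0 : \sum_(b' <- L | Q b' && (b' != b)) F b' = 0.
  by rewrite big_seq_cond big1 // => b' /and3P [b'L Qb' ne]; apply: others0.
move: sum0; rewrite (bigID (pred1 b)) /= rest0 addr0.
rewrite (eq_bigr (fun _ => F b)) ?big_const_seq ?iter_addr_0; last first.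
  by move=> b' /andP [_ /eqP ->].
move/eqP; rewrite mulrn_eq0 => /orP [/eqP count0 | /eqP //].
have : has (fun b' => Q b' && (b' == b)) L by apply/hasP; exists b; rewrite ?Qb ?eqxx.
by rewrite has_count count0.
Qed.

Definition pieri_at (T : seq nat -> nsym) (x : nat) (c : seq nat) : Prop :=
  nsym_mul (H x) (T c) =
  (fun w => \sum_(b <- comps (sumn c + x) | `[< hcstrip x b c >]) T b w).

Lemma pieri_unique (T1 T2 : seq nat -> nsym) N :
  T1 [::] = T2 [::] ->
  (forall x c, (0 < x)%N -> composition c -> (sumn c + x <= N)%N ->
     pieri_at T1 x c /\ pieri_at T2 x c) ->
  forall a, composition a -> (sumn a <= N)%N -> T1 a = T2 a.
Proof.
move=> T12_nil pieri12; elim/comp_lt_ind => -[// | x c] IH /andP [x0 comp_c].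
rewrite [sumn _]/= addnC => xcN.
have T12_c : T1 c = T2 c by apply: IH comp_c _; rewrite /comp_lt /=; lia.
have [pieri1 pieri2] := pieri12 x c x0 comp_c xcN.
apply: funext => w; apply/eqP; rewrite -subr_eq0; apply/eqP.
apply: (@sum_eq0_isolate _ (comps (sumn c + x)) (fun b => `[< hcstrip x b c >])
                          (fun b => T1 b w - T2 b w)).
- by rewrite addnC; apply: (comps_complete (b := x :: c)); rewrite /composition /= x0.
- exact/asboolP/hcstrip_cons.
- by rewrite sumrB -(congr1 (fun f => f w) pieri1) -(congr1 (fun f => f w) pieri2) T12_c subrr.
- move=> b /comps_sound [comp_b sum_b] /asboolP strip ne.
  have lt_b : comp_lt b (x :: c).
    rewrite /comp_lt sum_b /= addnC eqxx ltnn /=.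
    by case: (hcstrip_other x0 strip ne) => [-> // | [-> ->]]; rewrite eqxx orbT.
  by rewrite (IH b lt_b comp_b) ?sum_b ?subrr.
Qed.

Lemma ncSchur_pieri S x c : is_ncSchur S -> (0 < x)%N -> composition c -> pieri_at S x c.
Proof. by case=> _ _ pieri; apply: pieri. Qed.

Lemma ncAffSchur_pieri k Sk x c : is_ncAffSchur k Sk -> (0 < x)%N -> composition c ->
  (2 * (sumn c + x) <= k)%N -> pieri_at Sk x c.
Proof.
case=> _ _ pieri x0 comp_c small.
have kb_c : kbounded k c by apply: kbounded_sumn; lia.
rewrite /pieri_at (pieri x c) ?x0 ?comp_c ?kb_c //=; last lia.
apply: funext => w; rewrite [LHS]big_seq_cond [RHS]big_seq_cond; apply: eq_bigl => b.
case bL: (b \in _) => //=; have [comp_b sum_b] := comps_sound bL.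
rewrite comp_b kbounded_sumn /=; last lia.
apply/asboolP/asboolP => [[] // | strip].
by apply: hkcstrip_hcstrip; rewrite // sum_b; lia.
Qed.

Theorem mainTheorem4 (S : seq nat -> nsym) (Sk : nat -> seq nat -> nsym) :
  is_ncSchur S ->
  (forall k, (0 < k)%N -> is_ncAffSchur k (Sk k)) ->
  forall a, composition a ->
    exists K : nat, forall k, (K <= k)%N -> Sk k a = S a.
Proof.
move=> schur_S aff_Sk a comp_a; exists (2 * sumn a).+1 => k ka.
have aff_k := aff_Sk k (leq_trans (ltn0Sn _) ka).
apply: (pieri_unique (N := sumn a)) => //.
- by case: aff_k => ->; case: schur_S => ->.
- move=> x c x0 comp_c small; split; last exact: ncSchur_pieri.
  by apply: (ncAffSchur_pieri aff_k) => //; lia.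
Qed.
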